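(* Let $G$ be any group and let $\nu(G)$ be the group described in the context. Then: (i) for every $n\geq 0$, $[G,G^\varphi]^{(n)}=[G^{(n)},(G^{(n)})^\varphi]$ (computed inside $\nu(G)$); (ii) for every $n\geq 1$, $\gamma_{n+1}([G,G^\varphi])=[\gamma_{n}(G'),G'^{\varphi}]=[G',\gamma_{n}(G')^{\varphi}]$ (computed inside $\nu(G)$).
   Context: Conventions: ${}^gh=ghg^{-1}$ and $[g,h]=ghg^{-1}h^{-1}$. For a group $G$ let $G^\varphi$ be an isomorphic copy of $G$ via an isomorphism $\varphi:G\to G^\varphi$, $g\mapsto g^\varphi$. The group $\nu(G)$ is the quotient of the free product $G\ast G^\varphi$ by the normal subgroup generated by all words ${}^{g_3}[g_1,g_2^\varphi]\cdot[{}^{g_3}g_1,({}^{g_3}g_2)^\varphi]^{-1}$ and ${}^{g_3^\varphi}[g_1,g_2^\varphi]\cdot[{}^{g_3}g_1,({}^{g_3}g_2)^\varphi]^{-1}$, for all $g_1,g_2,g_3\in G$. For subgroups $A,B\le G$, $[A,B^\varphi]$ denotes the subgroup of $\nu(G)$ generated by all $[a,b^\varphi]$, $a\in A$, $b\in B$. The subgroup $[G,G^\varphi]$ is isomorphic to the non-abelian tensor square $G\otimes G$ of Brown and Loday. $G^{(n)}$ denotes the $n$-th derived subgroup ($G^{(0)}=G$), $\gamma_n$ the $n$-th term of the lower central series ($\gamma_1(H)=H$), and $G'=G^{(1)}$. *)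

(* Possibly infinite groups; nu(G) built concretely as words in
   the free product G * G^phi modulo the congruence generated by the defining
   relations (a setoid quotient). *)
From Stdlib Require Import List.
Import ListNotations.
Set Implicit Arguments.

Record group := Group {
  gcar :> Type;
  gmul : gcar -> gcar -> gcar;
  ginv : gcar -> gcar;
  gone : gcar;
  gmulA : forall x y z, gmul x (gmul y z) = gmul (gmul x y) z;
  gmul1 : forall x, gmul gone x = x;
  gmulV : forall x, gmul (ginv x) x = gone
}.

(** A "setoid group signature": carrier, equivalence, operations.
    Subgroups are predicates; they are always formed by generation,
    hence closed under the equivalence. *)
Record sgroup := SGroup {
  scar : Type;
  seqv : scar -> scar -> Prop;
  smul : scar -> scar -> scar;
  sinv : scar -> scar;
  sone : scar
}.

Section Generic.
Variable SG : sgroup.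

Inductive gen (X : scar SG -> Prop) : scar SG -> Prop :=
| gen_in x : X x -> gen X x
| gen_one : gen X (sone SG)
| gen_mul x y : gen X x -> gen X y -> gen X (smul SG x y)
| gen_inv x : gen X x -> gen X (sinv SG x)
| gen_eqv x y : seqv SG x y -> gen X x -> gen X y.

Definition scomm (x y : scar SG) : scar SG :=
  smul SG (smul SG (smul SG x y) (sinv SG x)) (sinv SG y).

Definition comm_sub (A B : scar SG -> Prop) : scar SG -> Prop :=
  gen (fun z => exists a b, A a /\ B b /\ z = scomm a b).

Fixpoint derived (H : scar SG -> Prop) (n : nat) : scar SG -> Prop :=
  match n with
  | 0 => H
  | S m => comm_sub (derived H m) (derived H m)
  end.

(** Lower central series: gamma_1(H) = H, gamma_(n+1)(H) = [gamma_n(H), H].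
    (gamma_0 is set to H as well; it is never used.) *)
Fixpoint gamma (H : scar SG -> Prop) (n : nat) : scar SG -> Prop :=
  match n with
  | S (S _ as m) => comm_sub (gamma H m) H
  | _ => H
  end.

Definition setT : scar SG -> Prop := fun _ => True.

Definition sub_eq (A B : scar SG -> Prop) : Prop := forall x, A x <-> B x.

End Generic.

Definition Gs (G : group) : sgroup := @SGroup (gcar G) eq (@gmul G) (@ginv G) (@gone G).

Definition gconj (G : group) (a x : G) : G := @gmul G a (@gmul G x (@ginv G a)).

(** Words of the free product G * G^phi: letters (false,g) = g, (true,g) = g^phi. *)
Section Nu.
Variable G : group.
Definition word := list (bool * gcar G).
Definition winv (w : word) : word := rev (map (fun l => (fst l, @ginv G (snd l))) w).
Definition wconj (a x : word) : word := a ++ x ++ winv a.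
Definition wcomm (x y : word) : word := x ++ y ++ winv x ++ winv y.
Definition iota (g : G) : word := [(false, g)].
Definition phi (g : G) : word := [(true, g)].

Definition rel1 (g1 g2 g3 : G) : word :=
  wconj (iota g3) (wcomm (iota g1) (phi g2))
  ++ winv (wcomm (iota (@gconj G g3 g1)) (phi (@gconj G g3 g2))).
Definition rel2 (g1 g2 g3 : G) : word :=
  wconj (phi g3) (wcomm (iota g1) (phi g2))
  ++ winv (wcomm (iota (@gconj G g3 g1)) (phi (@gconj G g3 g2))).

(** The congruence on words presenting nu(G): free product relations
    (merging letters of the same factor, deleting identities) plus the
    defining relators. *)
Inductive nu_eqv : word -> word -> Prop :=
| nu_refl w : nu_eqv w w
| nu_sym u v : nu_eqv u v -> nu_eqv v u
| nu_trans u v w : nu_eqv u v -> nu_eqv v w -> nu_eqv u w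
| nu_ctx a b u v : nu_eqv u v -> nu_eqv (a ++ u ++ b) (a ++ v ++ b)
| nu_merge (c : bool) (g h : G) : nu_eqv [(c, g); (c, h)] [(c, @gmul G g h)]
| nu_unit (c : bool) : nu_eqv [(c, gone G)] []
| nu_rel1 g1 g2 g3 : nu_eqv (rel1 g1 g2 g3) []
| nu_rel2 g1 g2 g3 : nu_eqv (rel2 g1 g2 g3) [].

Definition Nu : sgroup := @SGroup word nu_eqv (@app _) winv [].

(** [A, B^phi] inside nu(G), for subsets A, B of G. *)
Definition tens (A B : G -> Prop) : word -> Prop :=
  @gen Nu (fun z => exists a b, A a /\ B b /\ z = wcomm (iota a) (phi b)).
End Nu.
Arguments tens G A B : clear implicits.
Arguments derived SG H n : clear implicits.
Arguments gamma SG H n : clear implicits.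
Arguments setT SG _ : clear implicits.
Arguments sub_eq SG A B : clear implicits.

(* The heart of the proof is the identity [[a,b^phi],[c,d^phi]] = [[a,b],[c,d]^phi] in
   nu(G). It holds because conjugation by any w in nu(G) acts on the generators
   [x,y^phi] through the image of w in G, and [a,b^phi] differs from [a,b] by an element
   with trivial image that centralizes [c,d]^phi. Since both [[A,B^phi],[C,D^phi]] and
   [[A,B],[C,D]^phi] are generated by these elements and commutators expand like crossed
   pairings, the two subgroups coincide for normal A, B, C, D of G. Part (i) is then an
   induction on n, and so is part (ii), whose second form also uses [X,Y] = [Y,X]. *)

From Stdlib Require Import List Setoid Morphisms.
Import ListNotations.
Set Implicit Arguments.

Section GroupFacts.
Variable G : group.
Local Notation "x ** y" := (gmul G x y) (at level 40, left associativity).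
Local Notation "x ^-1" := (ginv G x) (at level 2).
Local Notation "1" := (gone G).

Lemma gmulAr (x y z : G) : x ** y ** z = x ** (y ** z).
Proof. now rewrite gmulA. Qed.

Lemma gmulxV (x : G) : x ** x^-1 = 1.
Proof.
  transitivity ((x^-1)^-1 ** x^-1 ** (x ** x^-1)).
  - rewrite gmulV. symmetry. apply gmul1.
  - rewrite gmulAr, (gmulA G (x^-1)), gmulV, gmul1. apply gmulV.
Qed.

Lemma gmul1r (x : G) : x ** 1 = x.
Proof. rewrite <- (gmulV G x), gmulA, gmulxV. apply gmul1. Qed.

Lemma gmulKl (x y : G) : x^-1 ** (x ** y) = y.
Proof. rewrite gmulA, gmulV. apply gmul1. Qed.

Lemma gmulKVl (x y : G) : x ** (x^-1 ** y) = y.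
Proof. rewrite gmulA, gmulxV. apply gmul1. Qed.

Lemma ginv_eq (x y : G) : x ** y = 1 -> x = y^-1.
Proof. intro H. rewrite <- (gmul1r x), <- (gmulxV y), gmulA, H. apply gmul1. Qed.

Lemma ginvK (x : G) : (x^-1)^-1 = x.
Proof. symmetry. apply ginv_eq, gmulxV. Qed.

Lemma ginvM (x y : G) : (x ** y)^-1 = y^-1 ** x^-1.
Proof.
  symmetry. apply ginv_eq.
  rewrite gmulAr, (gmulA G (x^-1)), gmulV, gmul1. apply gmulV.
Qed.

Lemma ginv1 : 1^-1 = 1.
Proof. symmetry. apply ginv_eq, gmul1. Qed.

End GroupFacts.

Ltac gsimpl := repeat rewrite ?ginvM, ?ginvK, ?ginv1, ?gmulAr, ?gmul1, ?gmul1r,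
  ?gmulV, ?gmulxV, ?gmulKl, ?gmulKVl.

Section Words.
Variable G : group.
Local Notation "x ** y" := (gmul G x y) (at level 40, left associativity).
Local Notation "x ^-1" := (ginv G x) (at level 2).
Local Notation "u =~ v" := (@nu_eqv G u v) (at level 70).
Local Notation W := (word G).
Local Notation i := (iota G).
Local Notation p := (phi G).

#[global] Instance nu_eqv_equiv : Equivalence (@nu_eqv G).
Proof.
  split; [intro; apply nu_refl | intros ??; apply nu_sym | intros ???; apply nu_trans].
Qed.

#[global] Instance app_nu_proper : Proper (@nu_eqv G ==> @nu_eqv G ==> @nu_eqv G) (@app _).
Proof.
  intros u u' Hu v v' Hv. transitivity (u' ++ v).
  - exact (nu_ctx [] v Hu).
  - pose proof (nu_ctx u' [] Hv) as H. now rewrite !app_nil_r in H.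
Qed.

Lemma winv_app (u v : W) : winv (u ++ v) = winv v ++ winv u.
Proof. unfold winv. now rewrite map_app, rev_app_distr. Qed.

Lemma winv_nil : winv ([] : W) = [].
Proof. reflexivity. Qed.

Lemma winvK (u : W) : winv (winv u) = u.
Proof.
  unfold winv. rewrite map_rev, rev_involutive, map_map.
  induction u as [|[c g] u IH]; simpl in *; [reflexivity|]. now rewrite ginvK, IH.
Qed.

Lemma winv_iota g : winv (i g) = i (g^-1). Proof. reflexivity. Qed.
Lemma winv_phi g : winv (p g) = p (g^-1). Proof. reflexivity. Qed.

Lemma iotaM g h : i g ++ i h =~ i (g ** h). Proof. apply nu_merge. Qed.
Lemma phiM g h : p g ++ p h =~ p (g ** h). Proof. apply nu_merge. Qed.

Lemma iotaM_l g h w : i g ++ i h ++ w =~ i (g ** h) ++ w.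
Proof. now rewrite app_assoc, iotaM. Qed.
Lemma phiM_l g h w : p g ++ p h ++ w =~ p (g ** h) ++ w.
Proof. now rewrite app_assoc, phiM. Qed.

Lemma iota1 : i (gone G) =~ []. Proof. apply nu_unit. Qed.
Lemma phi1 : p (gone G) =~ []. Proof. apply nu_unit. Qed.

Lemma iota1_l w : i (gone G) ++ w =~ w. Proof. now rewrite iota1. Qed.
Lemma phi1_l w : p (gone G) ++ w =~ w. Proof. now rewrite phi1. Qed.

Lemma app_winvl (u : W) : winv u ++ u =~ [].
Proof.
  induction u as [|[c g] u IH]; [reflexivity|].
  change ((c, g) :: u) with ([(c, g)] ++ u).
  rewrite winv_app, <- app_assoc, (app_assoc [(c, g^-1)]).
  change ([(c, g^-1)] ++ [(c, g)]) with [(c, g^-1); (c, g)].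
  now rewrite nu_merge, gmulV, nu_unit.
Qed.

Lemma app_winvr (u : W) : u ++ winv u =~ [].
Proof. rewrite <- (winvK u) at 1. apply app_winvl. Qed.

#[global] Instance winv_proper : Proper (@nu_eqv G ==> @nu_eqv G) (@winv G).
Proof.
  intros u v H. transitivity (winv u ++ (v ++ winv v)).
  - now rewrite app_winvr, app_nil_r.
  - now rewrite <- H at 1; rewrite app_assoc, app_winvl.
Qed.

Lemma app_winvKl (u w : W) : winv u ++ (u ++ w) =~ w.
Proof. now rewrite app_assoc, app_winvl. Qed.

Lemma app_winvKr (u w : W) : u ++ (winv u ++ w) =~ w.
Proof. now rewrite app_assoc, app_winvr. Qed.

Lemma app_cancel_l (u v w : W) : u ++ v =~ u ++ w -> v =~ w.
Proof. intro H. now rewrite <- (app_winvKl u v), H, app_winvKl. Qed.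

Lemma app_cancel_r (u v w : W) : v ++ u =~ w ++ u -> v =~ w.
Proof.
  intro H. rewrite <- (app_nil_r v), <- (app_nil_r w), <- (app_winvr u), !app_assoc.
  now rewrite H.
Qed.

End Words.

Ltac nstep := first
  [ progress rewrite ?winv_app, ?winvK, ?winv_iota, ?winv_phi, ?winv_nil,
      <- ?app_assoc, ?app_nil_r, ?app_nil_l
  | progress gsimpl
  | rewrite app_winvKl | rewrite app_winvKr | rewrite app_winvl | rewrite app_winvr
  | rewrite iotaM_l | rewrite phiM_l | rewrite iotaM | rewrite phiM
  | rewrite iota1_l | rewrite phi1_l | rewrite iota1 | rewrite phi1 ].
Ltac nsimpl := unfold wcomm, wconj in *; repeat nstep.
Section Commutators.
Variable G : group.
Local Notation "x ** y" := (gmul G x y) (at level 40, left associativity).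
Local Notation "x ^-1" := (ginv G x) (at level 2).
Local Notation "u =~ v" := (@nu_eqv G u v) (at level 70).
Local Notation W := (word G).
Local Notation i := (iota G).
Local Notation p := (phi G).
Local Notation cj := (gconj G).
Local Notation gc := (scomm (Gs G)).

#[global] Instance wconj_proper (w : W) : Proper (@nu_eqv G ==> @nu_eqv G) (wconj w).
Proof. intros x y H. unfold wconj. now rewrite H. Qed.

#[global] Instance wcomm_proper : Proper (@nu_eqv G ==> @nu_eqv G ==> @nu_eqv G) (@wcomm G).
Proof. intros x x' Hx y y' Hy. unfold wcomm. now rewrite Hx, Hy. Qed.

Lemma wcommMl (x y z : W) : wcomm (x ++ y) z =~ wconj x (wcomm y z) ++ wcomm x z.
Proof. nsimpl. reflexivity. Qed.
Lemma wcommMr (x y z : W) : wcomm x (y ++ z) =~ wcomm x y ++ wconj y (wcomm x z).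
Proof. nsimpl. reflexivity. Qed.
Lemma wcommVl (x z : W) : wcomm (winv x) z =~ wconj (winv x) (winv (wcomm x z)).
Proof. nsimpl. reflexivity. Qed.
Lemma wcommVr (x y : W) : wcomm x (winv y) =~ wconj (winv y) (winv (wcomm x y)).
Proof. nsimpl. reflexivity. Qed.
Lemma wcomm_nill (z : W) : wcomm [] z =~ [].
Proof. nsimpl. reflexivity. Qed.
Lemma wcomm_nilr (z : W) : wcomm z [] =~ [].
Proof. nsimpl. reflexivity. Qed.

Lemma wcomm_wconj (x y : W) : wcomm x y = wconj x y ++ winv y.
Proof. unfold wcomm, wconj. now rewrite <- !app_assoc. Qed.
Lemma wcommV (x y : W) : winv (wcomm x y) = wcomm y x.
Proof. unfold wcomm. now rewrite !winv_app, !winvK, <- !app_assoc. Qed.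

Lemma wconj_app (w x y : W) : wconj w (x ++ y) =~ wconj w x ++ wconj w y.
Proof. nsimpl. reflexivity. Qed.
Lemma wconj_nil (w : W) : wconj w [] =~ [].
Proof. nsimpl. reflexivity. Qed.
Lemma wconj_winv (w x : W) : wconj w (winv x) = winv (wconj w x).
Proof. unfold wconj. now rewrite !winv_app, winvK, app_assoc. Qed.
Lemma wconj_wcomm (w x y : W) : wconj w (wcomm x y) =~ wcomm (wconj w x) (wconj w y).
Proof. nsimpl. reflexivity. Qed.
Lemma wconjM (u v x : W) : wconj (u ++ v) x = wconj u (wconj v x).
Proof. unfold wconj. now rewrite !winv_app, <- !app_assoc. Qed.
Lemma wconjK (v x : W) : wconj (winv v) (wconj v x) =~ x.
Proof. nsimpl. reflexivity. Qed.

Lemma wcomm_eq_of_wconj_eq (t s s' : W) : wconj s t =~ wconj s' t -> wcomm t s =~ wcomm t s'.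
Proof.
  intro H.
  assert (E : forall s0, wcomm t s0 = t ++ winv (wconj s0 t)).
  { intro. unfold wconj, wcomm. now rewrite !winv_app, winvK, <- !app_assoc. }
  now rewrite !E, H.
Qed.

Lemma wcomm_app_central (y x z : W) : wconj x z =~ z -> wcomm (y ++ x) z =~ wcomm y z.
Proof.
  intro H. transitivity (y ++ wconj x z ++ winv y ++ winv z).
  - unfold wconj, wcomm. now rewrite !winv_app, <- !app_assoc.
  - now rewrite H.
Qed.

Lemma wconj_fix_of_wcomm (u v y : W) :
  wcomm v y =~ wcomm u y -> wconj (u ++ winv v) (wcomm u y) =~ wcomm u y ->
  wconj (u ++ winv v) y =~ y.
Proof.
  rewrite !wcomm_wconj. intros Hvu Hx.
  apply app_cancel_r in Hvu.
  assert (Hxu : wconj (u ++ winv v) (wconj u y) =~ wconj u y)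
    by now rewrite wconjM, <- Hvu, wconjK.
  rewrite wconj_app, Hxu in Hx. apply app_cancel_l in Hx.
  rewrite wconj_winv in Hx. apply winv_proper in Hx. now rewrite !winvK in Hx.
Qed.

Lemma nu_eqv_of_rel (X Y : W) : X ++ winv Y =~ [] -> X =~ Y.
Proof.
  intro H. transitivity (X ++ winv Y ++ Y).
  - now rewrite app_winvl, app_nil_r.
  - now rewrite app_assoc, H.
Qed.

Lemma wconj_iota_tens g a b : wconj (i g) (wcomm (i a) (p b)) =~ wcomm (i (cj g a)) (p (cj g b)).
Proof. apply nu_eqv_of_rel, (nu_rel1 G a b g). Qed.
Lemma wconj_phi_tens g a b : wconj (p g) (wcomm (i a) (p b)) =~ wcomm (i (cj g a)) (p (cj g b)).
Proof. apply nu_eqv_of_rel, (nu_rel2 G a b g). Qed.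

(* The image in G of a word of nu(G): both letters g and g^phi are read as g. *)
Definition wprod (w : W) : G := fold_right (fun l acc => snd l ** acc) (gone G) w.

Lemma wprod_app u v : wprod (u ++ v) = wprod u ** wprod v.
Proof. induction u as [|l u IH]; simpl; [now rewrite gmul1 | now rewrite IH, gmulA]. Qed.

Lemma wprod_winv u : wprod (winv u) = (wprod u)^-1.
Proof.
  induction u as [|[c g] u IH]; [simpl; now rewrite ginv1|].
  change ((c, g) :: u) with ([(c, g)] ++ u).
  rewrite winv_app, !wprod_app, IH. simpl. now gsimpl.
Qed.

Lemma wprod_iota g : wprod (i g) = g. Proof. apply gmul1r. Qed.
Lemma wprod_phi g : wprod (p g) = g. Proof. apply gmul1r. Qed.

Lemma wprod_wcomm_tens a b : wprod (wcomm (i a) (p b)) = gc a b.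
Proof. unfold wcomm. rewrite !wprod_app, !wprod_winv, wprod_iota, wprod_phi. simpl. now gsimpl. Qed.

Lemma wconj_tens_gen w a b :
  wconj w (wcomm (i a) (p b)) =~ wcomm (i (cj (wprod w) a)) (p (cj (wprod w) b)).
Proof.
  induction w as [|[c g] w IH].
  - unfold gconj. simpl wprod. rewrite !gmul1, ginv1, !gmul1r. nsimpl. reflexivity.
  - change ((c, g) :: w) with ([(c, g)] ++ w). rewrite wconjM, IH.
    change (wprod ([(c, g)] ++ w)) with (g ** wprod w).
    assert (E : forall x, cj (g ** wprod w) x = cj g (cj (wprod w) x))
      by (intro; unfold gconj; now gsimpl).
    rewrite !E. destruct c; [apply wconj_phi_tens | apply wconj_iota_tens].
Qed.

Lemma wconj_tens_gen_eq w g a b : wprod w = g ->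
  wconj w (wcomm (i a) (p b)) =~ wcomm (i (cj g a)) (p (cj g b)).
Proof. intros <-. apply wconj_tens_gen. Qed.

Lemma gconj1 x : cj (gone G) x = x.
Proof. unfold gconj. now gsimpl. Qed.

Theorem wcomm_tens_gens a b c d :
  wcomm (wcomm (i a) (p b)) (wcomm (i c) (p d)) =~ wcomm (i (gc a b)) (p (gc c d)).
Proof.
  set (k := gc c d).
  rewrite (wcomm_eq_of_wconj_eq _ _ (p k)).
  2:{ rewrite (wconj_tens_gen_eq _ _ _ (wprod_wcomm_tens c d)).
      now rewrite (wconj_tens_gen_eq _ _ _ (wprod_phi k)). }
  set (u := i (cj b a)). set (v := wconj (p b) (i a)).
  assert (Ht : wcomm (i a) (p b) =~ i (gc a b) ++ (u ++ winv v)).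
  { subst u v. unfold gconj. simpl scomm. nsimpl. reflexivity. }
  rewrite Ht, wcomm_app_central; [reflexivity|].
  apply wconj_fix_of_wcomm.
  - transitivity (wconj (p b) (wcomm (i a) (p (cj (b^-1) k)))).
    + subst v. unfold gconj. nsimpl. reflexivity.
    + rewrite (wconj_tens_gen_eq _ _ _ (wprod_phi b)).
      replace (cj b (cj b^-1 k)) with k by (unfold gconj; now gsimpl). reflexivity.
  - assert (Hx : wprod (u ++ winv v) = gone G).
    { subst u v. unfold wconj.
      rewrite !wprod_app, !wprod_winv, !wprod_app, !wprod_winv, !wprod_iota, !wprod_phi.
      unfold gconj. now gsimpl. }
    subst u. now rewrite (wconj_tens_gen_eq _ _ _ Hx), !gconj1.
Qed.

End Commutators.

Section Subgroups.
Variable SG : sgroup.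
Local Notation T := (scar SG).

Definition sconj (g x : T) : T := smul SG (smul SG g x) (sinv SG g).
Definition normal (H : T -> Prop) : Prop := forall g x, H x -> H (sconj g x).

Lemma gen_sub (S S' : T -> Prop) :
  (forall x, S x -> gen SG S' x) -> forall x, gen SG S x -> gen SG S' x.
Proof.
  intros HS x Hx. induction Hx.
  - auto.
  - apply gen_one.
  - now apply gen_mul.
  - now apply gen_inv.
  - eapply gen_eqv; eauto.
Qed.

Lemma sub_eq_refl (A : T -> Prop) : sub_eq SG A A.
Proof. intro; tauto. Qed.

Lemma sub_eq_trans (A B C : T -> Prop) : sub_eq SG A B -> sub_eq SG B C -> sub_eq SG A C.
Proof. intros H1 H2 x. rewrite (H1 x). apply H2. Qed.

Lemma sub_eq_comm_sub (A A' B B' : T -> Prop) :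
  sub_eq SG A A' -> sub_eq SG B B' -> sub_eq SG (comm_sub SG A B) (comm_sub SG A' B').
Proof.
  intros HA HB z; split; apply gen_sub; intros x (a & b & Ha & Hb & ->);
    apply gen_in; exists a, b; repeat split; try apply HA; try apply HB; auto.
Qed.

Lemma comm_sub_sym (A B : T -> Prop) :
  (forall x y, seqv SG (sinv SG (scomm SG x y)) (scomm SG y x)) ->
  sub_eq SG (comm_sub SG A B) (comm_sub SG B A).
Proof.
  intro Hsym.
  assert (H : forall A B z, comm_sub SG A B z -> comm_sub SG B A z).
  { intros A0 B0. apply gen_sub. intros z (a & b & Ha & Hb & ->).
    apply gen_eqv with (sinv SG (scomm SG b a)); [apply Hsym|].
    apply gen_inv, gen_in. now exists b, a. }
  intro z; split; apply H.
Qed.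

Lemma normal_setT : normal (setT SG).
Proof. now intros. Qed.

(* [sgroup] carries no axioms, so the behaviour of conjugation needed for normality is assumed. *)
Record conj_compatible : Prop := {
  sconj_one : forall g, seqv SG (sone SG) (sconj g (sone SG));
  sconj_mul : forall g x y, seqv SG (smul SG (sconj g x) (sconj g y)) (sconj g (smul SG x y));
  sconj_inv : forall g x, seqv SG (sinv SG (sconj g x)) (sconj g (sinv SG x));
  sconj_eqv : forall g x y, seqv SG x y -> seqv SG (sconj g x) (sconj g y);
  sconj_comm : forall g x y, seqv SG (scomm SG (sconj g x) (sconj g y)) (sconj g (scomm SG x y))
}.

Section Normal.
Hypothesis HC : conj_compatible.

Lemma normal_gen (S : T -> Prop) :
  (forall g s, S s -> gen SG S (sconj g s)) -> normal (gen SG S).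
Proof.
  intros HS g x Hx. induction Hx as [x Hx| | x y _ IHx _ IHy | x _ IHx | x y E _ IHx].
  - auto.
  - eapply gen_eqv; [apply (sconj_one HC) | apply gen_one].
  - eapply gen_eqv; [apply (sconj_mul HC) | now apply gen_mul].
  - eapply gen_eqv; [apply (sconj_inv HC) | now apply gen_inv].
  - eapply gen_eqv; [apply (sconj_eqv HC), E | exact IHx].
Qed.

Lemma normal_comm_sub (A B : T -> Prop) : normal A -> normal B -> normal (comm_sub SG A B).
Proof.
  intros HA HB. apply normal_gen. intros g s (a & b & Ha & Hb & ->).
  eapply gen_eqv; [apply (sconj_comm HC)|].
  apply gen_in. exists (sconj g a), (sconj g b). auto.
Qed.

Lemma normal_derived (H : T -> Prop) : normal H -> forall n, normal (derived SG H n).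
Proof. intros HH n. induction n; simpl; [exact HH | now apply normal_comm_sub]. Qed.

Lemma normal_gamma (H : T -> Prop) : normal H -> forall n, normal (gamma SG H n).
Proof.
  intros HH n. induction n as [|[|n] IH]; [exact HH | exact HH |].
  now apply normal_comm_sub.
Qed.

End Normal.
End Subgroups.

Section Tensor.
Variable G : group.
Local Notation "u =~ v" := (@nu_eqv G u v) (at level 70).
Local Notation W := (word G).
Local Notation i := (iota G).
Local Notation p := (phi G).

Lemma gconj_sconj (g x : G) : gconj G g x = sconj (Gs G) g x.
Proof. unfold gconj, sconj. simpl. now rewrite gmulA. Qed.

Lemma sconj_Nu (w x : W) : sconj (Nu G) w x = wconj w x.
Proof. unfold sconj, wconj. simpl. now rewrite <- app_assoc. Qed.

Lemma scomm_Nu (x y : W) : scomm (Nu G) x y = wcomm x y.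
Proof. unfold scomm, wcomm. simpl. now rewrite <- !app_assoc. Qed.

Lemma conj_compatible_Gs : conj_compatible (Gs G).
Proof. split; intros; unfold sconj, scomm; simpl in *; subst; gsimpl; reflexivity. Qed.

Lemma conj_compatible_Nu : conj_compatible (Nu G).
Proof.
  split; intros; rewrite ?sconj_Nu, ?scomm_Nu; simpl.
  - symmetry. apply wconj_nil.
  - symmetry. apply wconj_app.
  - now rewrite wconj_winv.
  - now apply wconj_proper.
  - symmetry. apply wconj_wcomm.
Qed.

Lemma sinv_scomm_Gs (x y : G) : seqv (Gs G) (sinv (Gs G) (scomm (Gs G) x y)) (scomm (Gs G) y x).
Proof. simpl. now gsimpl. Qed.

Lemma sinv_scomm_Nu (x y : W) : seqv (Nu G) (sinv (Nu G) (scomm (Nu G) x y)) (scomm (Nu G) y x).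
Proof. rewrite !scomm_Nu. simpl. rewrite wcommV. reflexivity. Qed.

Lemma normal_Nu_wconj (H : W -> Prop) w x : normal (Nu G) H -> H x -> H (wconj w x).
Proof. intros HH Hx. rewrite <- sconj_Nu. now apply HH. Qed.

Lemma normal_tens (A B : G -> Prop) :
  normal (Gs G) A -> normal (Gs G) B -> normal (Nu G) (tens G A B).
Proof.
  intros HA HB. apply (normal_gen conj_compatible_Nu). intros w s (a & b & Ha & Hb & ->).
  eapply gen_eqv; [rewrite sconj_Nu; symmetry; apply wconj_tens_gen|].
  apply gen_in. exists (gconj G (wprod w) a), (gconj G (wprod w) b).
  rewrite !gconj_sconj. auto.
Qed.

Lemma sub_eq_tens (A A' B B' : G -> Prop) :
  sub_eq (Gs G) A A' -> sub_eq (Gs G) B B' -> sub_eq (Nu G) (tens G A B) (tens G A' B').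
Proof.
  intros HA HB z; split; apply gen_sub; intros x (a & b & Ha & Hb & ->);
    apply gen_in; exists a, b; repeat split; try apply HA; try apply HB; auto.
Qed.

Section Pairing.
Variables (SG : sgroup) (f : scar SG -> scar SG -> W) (S : W -> Prop).
Hypotheses
  (f_eqvl : forall x x' y, seqv SG x x' -> f x y =~ f x' y)
  (f_eqvr : forall x y y', seqv SG y y' -> f x y =~ f x y')
  (f_onel : forall y, f (sone SG) y =~ [])
  (f_oner : forall x, f x (sone SG) =~ [])
  (f_mull : forall x x' y, exists w, f (smul SG x x') y =~ wconj w (f x' y) ++ f x y)
  (f_mulr : forall x y y', exists w, f x (smul SG y y') =~ f x y ++ wconj w (f x y'))
  (f_invl : forall x y, exists w, f (sinv SG x) y =~ wconj w (winv (f x y)))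
  (f_invr : forall x y, exists w, f x (sinv SG y) =~ wconj w (winv (f x y)))
  (S_normal : normal (Nu G) (gen (Nu G) S)).

Lemma gen_pairing (X Y : scar SG -> Prop) :
  (forall a b, X a -> Y b -> gen (Nu G) S (f a b)) ->
  forall x y, gen SG X x -> gen SG Y y -> gen (Nu G) S (f x y).
Proof.
  intros Hgen.
  assert (Hin : forall u v, v =~ u -> gen (Nu G) S u -> gen (Nu G) S v)
    by (intros u v E Hu; apply gen_eqv with u; [exact (nu_sym E) | exact Hu]).
  assert (Hconj : forall w u, gen (Nu G) S u -> gen (Nu G) S (wconj w u))
    by (intros; now apply normal_Nu_wconj).
  assert (Hone : gen (Nu G) S []) by apply (@gen_one (Nu G)).
  assert (Hmul : forall u v, gen (Nu G) S u -> gen (Nu G) S v -> gen (Nu G) S (u ++ v))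
    by (intros; now apply (@gen_mul (Nu G))).
  assert (Hinv : forall u, gen (Nu G) S u -> gen (Nu G) S (winv u))
    by (intros; now apply (@gen_inv (Nu G))).
  intros x y Hx. revert y.
  induction Hx as [a Ha| | x x' _ IHx _ IHx' | x _ IHx | x x' E _ IHx]; intros y Hy.
  - induction Hy as [b Hb| | y y' _ IHy _ IHy' | y _ IHy | y y' E _ IHy].
    + auto.
    + exact (Hin _ _ (f_oner a) Hone).
    + destruct (f_mulr a y y') as [w Ew]. apply (Hin _ _ Ew). auto.
    + destruct (f_invr a y) as [w Ew]. apply (Hin _ _ Ew). auto.
    + apply (Hin _ _ (nu_sym (f_eqvr _ _ _ E))), IHy.
  - exact (Hin _ _ (f_onel y) Hone).
  - destruct (f_mull x x' y) as [w Ew]. apply (Hin _ _ Ew). auto.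
  - destruct (f_invl x y) as [w Ew]. apply (Hin _ _ Ew). auto.
  - apply (Hin _ _ (nu_sym (f_eqvl _ _ _ E))), IHx, Hy.
Qed.

End Pairing.

Section CommTens.
Variables A B C D : G -> Prop.
Hypotheses (HA : normal (Gs G) A) (HB : normal (Gs G) B)
  (HC : normal (Gs G) C) (HD : normal (Gs G) D).

Lemma comm_sub_tens :
  sub_eq (Nu G) (comm_sub (Nu G) (tens G A B) (tens G C D))
    (tens G (comm_sub (Gs G) A B) (comm_sub (Gs G) C D)).
Proof.
  intro z; split; apply gen_sub.
  - intros z' (t & s & Ht & Hs & ->). rewrite scomm_Nu.
    revert t s Ht Hs. apply (gen_pairing (SG := Nu G)).
    + intros x x' y E. simpl in E. now rewrite E.
    + intros x y y' E. simpl in E. now rewrite E.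
    + apply wcomm_nill.
    + apply wcomm_nilr.
    + intros x x' y. exists x. apply wcommMl.
    + intros x y y'. exists y. apply wcommMr.
    + intros x y. exists (winv x). apply wcommVl.
    + intros x y. exists (winv y). apply wcommVr.
    + apply normal_tens; apply (normal_comm_sub conj_compatible_Gs); assumption.
    + intros t s (a & b & Ha & Hb & ->) (c & d & Hc & Hd & ->).
      eapply gen_eqv; [symmetry; apply wcomm_tens_gens|].
      apply gen_in. exists (scomm (Gs G) a b), (scomm (Gs G) c d).
      repeat split; apply gen_in; eauto.
  - intros z' (x & y & Hx & Hy & ->).
    revert x y Hx Hy. apply (gen_pairing (SG := Gs G) (fun x y => wcomm (i x) (p y))).
    + intros x x' y E. simpl in E. now subst.
    + intros x y y' E. simpl in E. now subst.
    + intro y. simpl. rewrite iota1. apply wcomm_nill.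
    + intro x. simpl. rewrite phi1. apply wcomm_nilr.
    + intros x x' y. exists (i x). simpl. rewrite <- iotaM. apply wcommMl.
    + intros x y y'. exists (p y). simpl. rewrite <- phiM. apply wcommMr.
    + intros x y. exists (winv (i x)). simpl. rewrite <- winv_iota. apply wcommVl.
    + intros x y. exists (winv (p y)). simpl. rewrite <- winv_phi. apply wcommVr.
    + apply (normal_comm_sub conj_compatible_Nu); apply normal_tens; assumption.
    + intros x y (a & b & Ha & Hb & ->) (c & d & Hc & Hd & ->).
      eapply gen_eqv; [apply wcomm_tens_gens|].
      apply gen_in. exists (wcomm (i a) (p b)), (wcomm (i c) (p d)).
      rewrite scomm_Nu. repeat split; apply gen_in; eauto.
Qed.

End CommTens.

Lemma normal_derived_setT n : normal (Gs G) (derived (Gs G) (setT (Gs G)) n).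
Proof. exact (normal_derived conj_compatible_Gs (@normal_setT (Gs G)) n). Qed.

Lemma derived_tens n :
  sub_eq (Nu G) (derived (Nu G) (tens G (setT (Gs G)) (setT (Gs G))) n)
    (tens G (derived (Gs G) (setT (Gs G)) n) (derived (Gs G) (setT (Gs G)) n)).
Proof.
  induction n as [|n IH]; [apply sub_eq_refl|].
  eapply sub_eq_trans; [apply (sub_eq_comm_sub IH IH)|].
  apply comm_sub_tens; apply normal_derived_setT.
Qed.

Lemma gamma_tens n : 1 <= n ->
  sub_eq (Nu G) (gamma (Nu G) (tens G (setT (Gs G)) (setT (Gs G))) (S n))
    (tens G (gamma (Gs G) (derived (Gs G) (setT (Gs G)) 1) n) (derived (Gs G) (setT (Gs G)) 1))
  /\
  sub_eq (Nu G) (gamma (Nu G) (tens G (setT (Gs G)) (setT (Gs G))) (S n))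
    (tens G (derived (Gs G) (setT (Gs G)) 1) (gamma (Gs G) (derived (Gs G) (setT (Gs G)) 1) n)).
Proof.
  intro Hn. destruct n as [|n]; [inversion Hn|]. clear Hn.
  pose proof (@normal_setT (Gs G)) as NT.
  pose proof (normal_derived_setT 1) as N1.
  induction n as [|n [IHl IHr]].
  - split; exact (comm_sub_tens NT NT NT NT).
  - pose proof (normal_gamma conj_compatible_Gs N1 (S n)) as Nn. split.
    + eapply sub_eq_trans; [apply (sub_eq_comm_sub IHl (sub_eq_refl _ _))|].
      exact (comm_sub_tens Nn N1 NT NT).
    + eapply sub_eq_trans; [apply (sub_eq_comm_sub IHr (sub_eq_refl _ _))|].
      eapply sub_eq_trans; [apply comm_sub_sym, sinv_scomm_Nu|].
      eapply sub_eq_trans; [apply (comm_sub_tens NT NT N1 Nn)|].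
      apply sub_eq_tens; [apply sub_eq_refl | apply comm_sub_sym, sinv_scomm_Gs].
Qed.

End Tensor.

Theorem proposition1p3 (G : group) :
  (forall n : nat,
     sub_eq (Nu G)
       (derived (Nu G) (tens G (setT (Gs G)) (setT (Gs G))) n)
       (tens G (derived (Gs G) (setT (Gs G)) n) (derived (Gs G) (setT (Gs G)) n)))
  /\
  (forall n : nat, 1 <= n ->
     sub_eq (Nu G)
       (gamma (Nu G) (tens G (setT (Gs G)) (setT (Gs G))) (S n))
       (tens G (gamma (Gs G) (derived (Gs G) (setT (Gs G)) 1) n)
               (derived (Gs G) (setT (Gs G)) 1))
     /\
     sub_eq (Nu G)
       (gamma (Nu G) (tens G (setT (Gs G)) (setT (Gs G))) (S n))
       (tens G (derived (Gs G) (setT (Gs G)) 1)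
               (gamma (Gs G) (derived (Gs G) (setT (Gs G)) 1) n))).
Proof. split; [apply derived_tens | apply gamma_tens]. Qed.
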